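(* For any real numbers $\alpha,\beta$ with $0<\alpha<\beta<1$, there exists a market $(D,H,X,\succ_D,f_H,B_H)$ such that $\overline{w}_h\le \beta B_h$ for every hospital $h\in H$, and such that for every budget vector $B'_H=(B'_h)_{h\in H}$ with $B_h\le B'_h\le (1+\alpha)B_h$ for all $h\in H$, the market has no $B'_H$-stable matching.
   Context: A market $(D,H,X,\succ_D,f_H,B_H)$ consists of a finite set of doctors $D$, a finite set of hospitals $H$, a finite set of contracts $X\subseteq D\times H\times\mathbb{R}_{>0}$ (a contract $x=(d,h,w)$ has doctor $x_D=d$, hospital $x_H=h$ and wage $x_W=w$), for each doctor $d$ a strict preference $\succ_d$ over $X_d\cup\{\emptyset\}$ ($\emptyset$ meaning unmatched), for each hospital $h$ an additive utility $f_h$ on subsets of $X_h$ with $f_h(x)>0$ for each $x\in X_h$ and $f_h(Y)=\sum_{x\in Y}f_h(x)$, and a budget $B_h>0$; it is assumed that $0<x_W\le B_h$ for every $x\in X_h$. For $Y\subseteq X$: $Y_d=\{x\in Y: x_D=d\}$, $Y_h=\{x\in Y:x_H=h\}$, $w_h(Y)=\sum_{x\in Y_h}x_W$. Also $\overline{w}_h=\max_{x\in X_h}x_W$. A matching is a set $Y\subseteq X$ with $|Y_d|\le 1$ for all $d\in D$. Given $B'_H=(B'_h)_{h\in H}$, a matching $Y$ is $B'_H$-feasible if $w_h(Y)\le B'_h$ for all $h$. A matching $Z\subseteq X_h$ blocks $Y$ (for hospital $h$) if for every $x\in Z\setminus Y$ the doctor $x_D$ strictly prefers $x$ to her contract in $Y$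 (or to $\emptyset$ if she has none), $f_h(Z)>f_h(Y_h)$, and $w_h(Z)\le B'_h$. A matching $Y$ is $B'_H$-stable if it is $B'_H$-feasible and no hospital $h$ and set $Z\subseteq X_h$ block $Y$. *)

From HB Require Import structures.
From mathcomp Require Import all_boot all_order all_algebra.
From mathcomp Require Import reals.
Set Implicit Arguments. Unset Strict Implicit. Unset Printing Implicit Defensive.
Import Order.TTheory GRing.Theory Num.Theory.
Local Open Scope ring_scope.

(* Contracts form a finite type [con] with
   projections doctor/hospital/wage; the triple map is injective so that
   X is (in bijection with) a finite subset of D x H x R_{>0}.
   [pref d a b] means  a >_d b  on  X_d \cup {emptyset}  (None = unmatched). *)
Definition acceptable (doc con : finType) (cD : con -> doc) (d : doc)
  (a : option con) : bool :=
  if a is Some x then cD x == d else true.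

Record market (R : realType) := Market {
  doc : finType;
  hosp : finType;
  con : finType;
  cD : con -> doc;
  cH : con -> hosp;
  cW : con -> R;
  con_inj : injective (fun x => (cD x, cH x, cW x));
  pref : doc -> rel (option con);
  fval : con -> R;           (* f_h(x) for h = cH x; f_h additive *)
  budget : hosp -> R;
  pref_irr : forall d a, acceptable cD d a -> ~~ pref d a a;
  pref_trans : forall d a b c, acceptable cD d a -> acceptable cD d b ->
    acceptable cD d c -> pref d a b -> pref d b c -> pref d a c;
  pref_total : forall d a b, acceptable cD d a -> acceptable cD d b ->
    a != b -> pref d a b || pref d b a;
  fval_pos : forall x, 0 < fval x;
  budget_pos : forall h, 0 < budget h;
  cW_pos : forall x, 0 < cW x;
  cW_le_budget : forall x, cW x <= budget (cH x)
}.

Section MarketDefs.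
Variable R : realType.
Variable M : market R.

Local Notation X := (con M).

Definition setD_ (Y : {set X}) (d : doc M) : {set X} := [set x in Y | cD x == d].
Definition setH_ (Y : {set X}) (h : hosp M) : {set X} := [set x in Y | cH x == h].
Definition wage_h (Y : {set X}) (h : hosp M) : R := \sum_(x in setH_ Y h) cW x.
Definition futil (Y : {set X}) : R := \sum_(x in Y) fval x.

Definition wbar (h : hosp M) : R := \big[Num.max/0]_(x : X | cH x == h) cW x.

Definition is_matching (Y : {set X}) : Prop := forall d, (#|setD_ Y d| <= 1)%N.

Definition contract_of (Y : {set X}) (d : doc M) : option X :=
  [pick y in Y | cD y == d].

Definition feasible (B' : hosp M -> R) (Y : {set X}) : Prop :=
  is_matching Y /\ forall h, wage_h Y h <= B' h.

Definition blocks (B' : hosp M -> R) (Y : {set X}) (h : hosp M) (Z : {set X}) : Prop :=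
  [/\ is_matching Z,
      (forall x, x \in Z -> cH x = h),
      (forall x, x \in Z -> x \notin Y -> pref (cD x) (Some x) (contract_of Y (cD x))),
      futil (setH_ Y h) < futil Z
    & wage_h Z h <= B' h].

Definition stable (B' : hosp M -> R) (Y : {set X}) : Prop :=
  feasible B' Y /\ ~ (exists h Z, blocks B' Y h Z).

End MarketDefs.

From HB Require Import structures.
From mathcomp Require Import all_boot all_order all_algebra.
From mathcomp Require Import reals.
From mathcomp Require Import lra zify.
Import Order.TTheory GRing.Theory Num.Theory.
Local Open Scope ring_scope.
Set Implicit Arguments. Unset Strict Implicit. Unset Printing Implicit Defensive.

(* Two hospitals h0, h1 with budget 1.  Doctor b is acceptable only to h0, at
   wage beta and value V ~ n beta.  Doctors z_1..z_p prefer h0 (wage 1/n, value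
   1 + 1/n) to h1 (wage beta, value m + 1); doctors x_1..x_m prefer h1 (wage
   1/m, value 1) to h0 (wage 1/n, value 1); here m = n^2 and p ~ n (1 + alpha -
   beta) is just large enough that b and all the z's do not fit into h0; all
   wages are at most beta.  Let 1 <= B'_h <= 1 + alpha and let Y be B'-stable.
   - If no z works at h1, then h1 employs every x (they all fit), hence every z
     works at h0 (otherwise h1 would trade all its x's for that z), hence b is
     unmatched, and h0 prefers b plus floor (n (B'_h0 - beta)) of its z's.
   - If z_i works at h1 but b does not work at h0, then h0 hires z_i: on top of
     its staff if there is room, otherwise in place of some x (h0 cannot be
     filled with z's alone since p <= n).
   - If z_i works at h1 and b at h0, then h1 employs at most a share
     1 + alpha - beta of the x's, so m (beta - alpha) >= n (1 + alpha) leaves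
     enough unemployed x's for h0 to fire b and hire more than V of them with
     the freed budget. *)

Lemma ler_sum_subset (R : numDomainType) (T : finType) (A B : {set T}) (F : T -> R) :
  A \subset B -> (forall x, x \in B -> 0 <= F x) ->
  \sum_(x in A) F x <= \sum_(x in B) F x.
Proof.
move=> AB F_ge0; rewrite [leRHS](big_setID A) /= (setIidPr AB) lerDl.
by apply: sumr_ge0 => x; rewrite inE => /andP[_ /F_ge0].
Qed.

Lemma sumr_const_in (R : pzSemiRingType) (T : finType) (A : {set T}) (F : T -> R) c :
  (forall x, x \in A -> F x = c) -> \sum_(x in A) F x = #|A|%:R * c.
Proof. by move=> Fc; rewrite (eq_bigr _ Fc) sumr_const mulr_natl. Qed.

Lemma big_setU_disjoint (R : Type) (idx : R) (op : Monoid.com_law idx)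
  (T : finType) (A B : {set T}) (F : T -> R) : [disjoint A & B] ->
  \big[op/idx]_(x in A :|: B) F x =
    op (\big[op/idx]_(x in A) F x) (\big[op/idx]_(x in B) F x).
Proof. by move=> AB; rewrite -bigU //; apply: eq_bigl => x; rewrite !inE. Qed.

Lemma exists_subset_card (T : finType) (A : {set T}) k :
  (k <= #|A|)%N -> exists2 S : {set T}, S \subset A & #|S| = k.
Proof.
case/card_geqP=> s [s_uniq s_size sA]; exists [set:: s].
  by apply/subsetP=> x; rewrite inE => /sA.
by rewrite cardsE (card_uniqP s_uniq).
Qed.

Section MarketFacts.
Variables (R : realType) (M : market R).

Lemma setH_id (Z : {set con M}) h : (forall x, x \in Z -> cH x = h) -> setH_ Z h = Z.
Proof.
by move=> Zh; apply/setP => x; rewrite inE andb_idr // => /Zh ->.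
Qed.

Lemma matching_doctor_inj (Y : {set con M}) x y : is_matching Y ->
  x \in Y -> y \in Y -> cD x = cD y -> x = y.
Proof.
move=> Ym xY yY xy; apply: (card_le1_eqP (Ym (cD x)));
  by rewrite inE ?xY ?yY xy eqxx.
Qed.

End MarketFacts.

Section Construction.
Variables (R : realType) (beta V : R) (n m p : nat).

(* Doctor [None] is b, [inl i] is z_i and [inr j] is x_j; hospital [false] is
   h0 and [true] is h1; contract [None] is (b, h0) and [Some (h, d)] is (d, h). *)
Definition doctor := option ('I_p + 'I_m).
Definition contract := option (bool * ('I_p + 'I_m)).

Definition doctor_of (c : contract) : doctor := omap snd c.
Definition hospital_of (c : contract) : bool := if c is Some (h, _) then h else false.

Definition wage (c : contract) : R :=
  match c with
  | Some (false, _) => n%:R^-1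
  | Some (true, inr _) => m%:R^-1
  | _ => beta
  end.

Definition value (c : contract) : R :=
  match c with
  | None => V
  | Some (false, inl _) => 1 + n%:R^-1
  | Some (true, inl _) => m%:R + 1
  | Some (_, inr _) => 1
  end.

(* The position of [c] in its doctor's list; being unmatched has rank 2. *)
Definition rank (c : contract) : nat :=
  match c with
  | None => 0
  | Some (h, inl _) => h
  | Some (h, inr _) => ~~ h
  end.

Definition prefers (_ : doctor) : rel (option contract) :=
  fun a b => (oapp rank 2 a < oapp rank 2 b)%N.

Lemma contract_inj (x y : contract) :
  doctor_of x = doctor_of y -> hospital_of x = hospital_of y -> x = y.
Proof. by case: x => [[h d]|]; case: y => [[h' d']|] //= [->] ->. Qed.

Lemma rank_inj (x y : contract) :
  doctor_of x = doctor_of y -> rank x = rank y -> x = y.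
Proof.
move=> dxy rxy; apply: contract_inj => //.
by move: dxy rxy; case: x => [[[] [i|j]]|]; case: y => [[[] [i'|j']]|].
Qed.

Lemma triple_inj : injective (fun x => (doctor_of x, hospital_of x, wage x)).
Proof. by move=> x y [] /contract_inj xy /xy. Qed.

Lemma prefers_irr d a : acceptable doctor_of d a -> ~~ prefers d a a.
Proof. by rewrite /prefers ltnn. Qed.

Lemma prefers_trans d a b c : acceptable doctor_of d a -> acceptable doctor_of d b ->
  acceptable doctor_of d c -> prefers d a b -> prefers d b c -> prefers d a c.
Proof. by move=> _ _ _; apply: ltn_trans. Qed.

Lemma prefers_total d a b : acceptable doctor_of d a -> acceptable doctor_of d b ->
  a != b -> prefers d a b || prefers d b a.
Proof.
rewrite /prefers -neq_ltn => da db; apply: contraNN => /eqP rab; apply/eqP.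
have rank_le1 x : (rank x <= 1)%N by case: x => [[[] [i|j]]|].
case: a b da db rab => [x|] [y|] //= /eqP dx /eqP dy.
- by move/rank_inj=> -> //; rewrite dx dy.
- by move=> rx; have := rank_le1 x; rewrite rx.
- by move=> ry; have := rank_le1 y; rewrite -ry.
Qed.

Hypotheses (beta_gt0 : 0 < beta) (beta_le1 : beta <= 1) (n_gt0 : (0 < n)%N)
  (m_gt0 : (0 < m)%N) (V_gt0 : 0 < V).

Lemma wage_gt0 c : 0 < wage c.
Proof. by case: c => [[[] [i|j]]|] //=; rewrite invr_gt0 ltr0n. Qed.

Lemma wage_le1 c : wage c <= 1.
Proof. by case: c => [[[] [i|j]]|] //=; rewrite invf_le1 ?ltr0n ?ler1n. Qed.

Lemma value_gt0 c : 0 < value c.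
Proof.
case: c => [[[] [i|j]]|] //=; rewrite ?ltr01 //.
  by rewrite ltr_pwDr ?ltr01 ?ler0n.
by rewrite ltr_pwDl ?invr_ge0 ?ler0n ?ltr01.
Qed.

Definition unstable_market : market R :=
  @Market R doctor bool contract doctor_of hospital_of wage triple_inj prefers value
    (fun _ => 1) prefers_irr prefers_trans prefers_total value_gt0 (fun _ => ltr01)
    wage_gt0 wage_le1.

Local Notation Mk := unstable_market.
Local Notation bc := (None : con Mk).
Local Notation zc h i := (Some (h, inl i) : con Mk).
Local Notation xc h j := (Some (h, inr j) : con Mk).

Lemma wbar_unstable_market : n%:R^-1 <= beta -> m%:R^-1 <= beta ->
  forall h : hosp Mk, wbar h <= beta * budget h.
Proof.
move=> n_small m_small h; rewrite /= mulr1 /wbar.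
apply: (big_ind (fun w => w <= beta)); first exact: ltW.
  by move=> w w' ? ?; rewrite ge_max; apply/andP.
by case=> [[[] [i|j]]|].
Qed.

Definition zs h : {set con Mk} := [set zc h i | i : 'I_p].
Definition xs h : {set con Mk} := [set xc h j | j : 'I_m].

Lemma card_zs h : #|zs h| = p.
Proof. by rewrite card_imset ?card_ord // => i i' [->]. Qed.

Lemma card_xs h : #|xs h| = m.
Proof. by rewrite card_imset ?card_ord // => j j' [->]. Qed.

Lemma pref_top (Z : {set con Mk}) (x : con Mk) : rank x = 0%N -> x \notin Z ->
  pref (cD x) (Some x) (contract_of Z (cD x)).
Proof.
move=> x_top xZ; rewrite /contract_of; case: pickP => [y /andP[yZ /eqP dyx]|_].
  rewrite /= /prefers /= x_top lt0n; apply: contraNneq xZ => y_top.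
  by rewrite -(rank_inj dyx) // y_top x_top.
by rewrite /= /prefers /= x_top.
Qed.

Lemma pref_unmatched (Z : {set con Mk}) (x : con Mk) :
  (forall y, y \in Z -> cD y != cD x) -> pref (cD x) (Some x) (contract_of Z (cD x)).
Proof.
move=> x_new; rewrite /contract_of; case: pickP => [y /andP[/x_new/negPf-> //]|_].
by rewrite /= /prefers; case: x {x_new} => [[[] [i|j]]|].
Qed.

Lemma wage_h0_not_b (Z : {set con Mk}) x :
  x \in setH_ Z false :\ bc -> cW x = n%:R^-1.
Proof. by case: x => [[[] [i|j]]|]; rewrite !inE //= andbF. Qed.

Lemma sum_wage_zs0 : \sum_(x in zs false) cW x = p%:R / n%:R.
Proof. by rewrite (@sumr_const_in _ _ _ _ n%:R^-1) ?card_zs // => _ /imsetP[i _ ->]. Qed.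

Lemma sum_value_zs0 : \sum_(x in zs false) fval x = p%:R * (1 + n%:R^-1).
Proof.
by rewrite (@sumr_const_in _ _ _ _ (1 + n%:R^-1)) ?card_zs // => _ /imsetP[i _ ->].
Qed.

Lemma sum_wage_xs1 : \sum_(x in xs true) cW x = 1.
Proof.
rewrite (@sumr_const_in _ _ _ _ m%:R^-1) ?card_xs ?divff ?pnatr_eq0 -?lt0n //.
by move=> _ /imsetP[j _ ->].
Qed.

Lemma sum_value_xs1 : \sum_(x in xs true) fval x = m%:R.
Proof. by rewrite (@sumr_const_in _ _ _ _ 1) ?card_xs ?mulr1 // => _ /imsetP[j _ ->]. Qed.

Section Instability.
Variable alpha : R.
Hypotheses (p_large : n%:R * (1 + alpha - beta) < p%:R)
  (p_le_n : (p <= n)%N)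
  (V_large : (1 + n%:R^-1) * (p%:R - n%:R * (1 - beta) + 1) <= V)
  (V_small : V <= n%:R * beta - 1)
  (m_large : n%:R * (1 + alpha) <= m%:R * (beta - alpha)).

Lemma z_overflow : 1 + alpha < beta + p%:R / n%:R.
Proof.
suff : 1 + alpha - beta < p%:R / n%:R by lra.
by rewrite ltr_pdivlMr ?ltr0n // mulrC.
Qed.

Section StableMatching.
Variables (B' : hosp Mk -> R) (Y : {set con Mk}).
Hypotheses (B'_range : forall h, 1 <= B' h <= 1 + alpha) (Y_stable : stable B' Y).

Lemma Y_matching : is_matching Y.
Proof. by case: Y_stable => -[]. Qed.

Lemma Y_wage h : wage_h Y h <= B' h.
Proof. by case: Y_stable => -[_]. Qed.

Lemma block_absurd h (Z : {set con Mk}) :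
  (forall x, x \in Z -> cH x = h) ->
  (forall x, x \in Z -> x \notin Y -> pref (cD x) (Some x) (contract_of Y (cD x))) ->
  futil (setH_ Y h) < futil Z -> \sum_(x in Z) cW x <= B' h -> False.
Proof.
move=> Zh Z_pref Z_value Z_wage; apply: Y_stable.2; exists h, Z; split=> //.
  move=> d; apply/card_le1_eqP => x y; rewrite !inE => /andP[xZ /eqP dx] /andP[yZ /eqP dy].
  apply: contract_inj; first by rewrite [doctor_of x]dx [doctor_of y]dy.
  by rewrite [hospital_of x](Zh _ xZ) [hospital_of y](Zh _ yZ).
by rewrite /wage_h (setH_id Zh).
Qed.

Lemma z_not_at_both i : zc true i \in Y -> zc false i \notin Y.
Proof.
by move=> zi_h1; apply/negP => /(matching_doctor_inj Y_matching zi_h1)/(_ erefl).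
Qed.

Section NoZAtH1.
Hypothesis no_z_h1 : forall i, zc true i \notin Y.

Lemma h1_only_x : setH_ Y true \subset xs true.
Proof.
apply/subsetP => -[[[] [i|j]]|]; rewrite inE => /andP[xY /eqP //= _].
  by rewrite (negPf (no_z_h1 i)) in xY.
exact: imset_f.
Qed.

Lemma all_x_at_h1 j : xc true j \in Y.
Proof.
apply/negPn/negP => xj_out.
have Zh x : x \in xc true j |: setH_ Y true -> cH x = true.
  by rewrite !inE => /orP[/eqP-> | /andP[_ /eqP]].
apply: (block_absurd Zh).
- move=> x; rewrite !inE => /orP[/eqP-> _ | /andP[-> //]].
  exact: pref_top.
- by rewrite /futil big_setU1 ?inE ?(negPf xj_out) //= ltrDr ltr01.
- apply: le_trans (proj1 (andP (B'_range true))); rewrite -sum_wage_xs1.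
  apply: ler_sum_subset => [|x _]; last exact: ltW (wage_gt0 x).
  by rewrite subUset sub1set imset_f ?h1_only_x.
Qed.

Lemma all_z_at_h0 i : zc false i \in Y.
Proof.
apply/negPn/negP => zi_out.
apply: (@block_absurd true [set zc true i]) => [x /set1P-> //|x /set1P-> _||].
- apply: pref_unmatched => -[[h [i'|j]]|] //= yY; apply/eqP => -[ii']; subst i'.
  by case: h yY; rewrite ?(negPf zi_out) ?(negPf (no_z_h1 i)).
- have := ler_sum_subset h1_only_x (fun x _ => ltW (value_gt0 x)).
  rewrite /futil sum_value_xs1 big_set1 /=; lra.
- by rewrite big_set1; apply: le_trans beta_le1 (proj1 (andP (B'_range true))).
Qed.

Lemma b_unmatched : bc \notin Y.
Proof.
apply/negP => bY.
have : \sum_(x in bc |: zs false) cW x <= wage_h Y false.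
  apply: ler_sum_subset => [|x _]; last exact: ltW (wage_gt0 x).
  rewrite subUset sub1set inE bY /=; apply/subsetP => _ /imsetP[i _ ->].
  by rewrite inE all_z_at_h0.
rewrite big_setU1 ?sum_wage_zs0 /=; last by apply/imsetP => -[].
have := Y_wage false; have := B'_range false; have := z_overflow; lra.
Qed.

Lemma h0_only_z : setH_ Y false \subset zs false.
Proof.
apply/subsetP => -[[[] [i|j]]|]; rewrite inE => /andP[xY /eqP //= _].
- exact: imset_f.
- by have := matching_doctor_inj Y_matching xY (all_x_at_h1 j) erefl.
- by have := b_unmatched; rewrite xY.
Qed.

Lemma no_z_at_h1_absurd : False.
Proof.
have nR_gt0 : 0 < n%:R :> R by rewrite ltr0n.
have /andP[B'_ge1 B'_le] := B'_range false.
set q := Num.truncn (n%:R * (B' false - beta)).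
have /andP[q_le q_gt] : (q%:R : R) <= n%:R * (B' false - beta) < q.+1%:R.
  apply: truncn_itv; apply: mulr_ge0; first exact: ltW.
  by rewrite subr_ge0; apply: le_trans B'_ge1.
have q_le_p : (q <= p)%N.
  rewrite -(ler_nat R); apply/ltW/(le_lt_trans q_le)/(le_lt_trans _ p_large).
  by rewrite ler_pM2l // lerB.
rewrite -(card_zs false) in q_le_p; have [S S_z card_S] := exists_subset_card q_le_p.
have b_S : bc \notin S by apply/negP => /(subsetP S_z)/imsetP[].
have Zh x : x \in bc |: S -> cH x = false.
  by rewrite !inE => /orP[/eqP-> // | /(subsetP S_z)/imsetP[i _ ->]].
apply: (block_absurd Zh).
- move=> x; rewrite !inE => /orP[/eqP-> b_out | /(subsetP S_z)/imsetP[i _ -> ]].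
    exact: pref_top.
  by rewrite all_z_at_h0.
- have := ler_sum_subset h0_only_z (fun x _ => ltW (value_gt0 x)).
  rewrite sum_value_zs0 => /le_lt_trans; apply.
  rewrite /futil big_setU1 //= (@sumr_const_in _ _ S _ (1 + n%:R^-1));
    last by move=> x /(subsetP S_z)/imsetP[i _ ->].
  rewrite card_S -natr1 in q_gt *.
  have q_large : n%:R * (1 - beta) < q%:R + 1.
    by apply: le_lt_trans q_gt; rewrite ler_pM2l // lerB.
  have q_gap : p%:R - q%:R < p%:R - n%:R * (1 - beta) + 1 by lra.
  have : (1 + n%:R^-1) * (p%:R - q%:R) < V.
    by apply: lt_le_trans V_large; rewrite ltr_pM2l // ltr_pwDl ?invr_ge0 ?ler0n.
  lra.
- rewrite big_setU1 //= (@sumr_const_in _ _ S _ n%:R^-1);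
    last by move=> x /(subsetP S_z)/imsetP[i _ ->].
  have : (q%:R : R) * n%:R^-1 <= B' false - beta by rewrite ler_pdivrMr // mulrC.
  rewrite card_S; lra.
Qed.

End NoZAtH1.

Lemma some_z_at_h1 : exists i, zc true i \in Y.
Proof. by apply/existsP/contraT => /existsPn/no_z_at_h1_absurd. Qed.

Definition hired_x h : {set 'I_m} := [set j | xc h j \in Y].

Lemma wage_h0_with_b : bc \in Y ->
  wage_h Y false = beta + #|setH_ Y false :\ bc|%:R / n%:R.
Proof.
move=> bY; rewrite /wage_h (big_setD1 bc) ?inE ?bY //=.
by rewrite (@sumr_const_in _ _ _ _ n%:R^-1) //; apply: wage_h0_not_b.
Qed.

Definition free_x : {set 'I_m} := ~: (hired_x true :|: hired_x false).

Lemma card_free_x : (m <= #|free_x| + #|hired_x true| + #|setH_ Y false :\ bc|)%N.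
Proof.
have h0_x : (#|hired_x false| <= #|setH_ Y false :\ bc|)%N.
  have x_inj : injective (fun j => xc false j) by move=> j j' [].
  rewrite -(card_imset _ x_inj); apply: subset_leq_card.
  by apply/subsetP => _ /imsetP[j + ->]; rewrite !inE => ->.
have := cardsC (hired_x true :|: hired_x false); rewrite card_ord.
have := (leq_card_setU (hired_x true) (hired_x false)).1.
rewrite /free_x; lia.
Qed.

Section ZAtH1.
Variable i : 'I_p.
Hypothesis zi_h1 : zc true i \in Y.

Lemma h0_full : B' false < wage_h Y false + n%:R^-1.
Proof.
rewrite ltNge; apply/negP => room.
have zi_out : zc false i \notin setH_ Y false by rewrite inE (negPf (z_not_at_both zi_h1)).
have Zh x : x \in zc false i |: setH_ Y false -> cH x = false.
  by rewrite !inE => /orP[/eqP-> | /andP[_ /eqP]].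
apply: (block_absurd Zh).
- move=> x; rewrite !inE => /orP[/eqP-> zi_new | /andP[-> //]].
  exact: pref_top.
- rewrite /futil big_setU1 //= ltrDr; exact: value_gt0 (zc false i).
- by rewrite big_setU1 //= addrC.
Qed.

Lemma x_at_h0 : bc \notin Y -> exists j, xc false j \in Y.
Proof.
move=> b_out; apply/existsP/contraT => /existsPn no_x_h0.
have sub_zs : zc false i |: setH_ Y false \subset zs false.
  rewrite subUset sub1set imset_f //=; apply/subsetP => -[[[] [i'|j]]|];
    rewrite inE => /andP[xY /eqP //= _]; first exact: imset_f.
    by rewrite (negPf (no_x_h0 j)) in xY.
  by rewrite xY in b_out.
have := ler_sum_subset sub_zs (fun x _ => ltW (wage_gt0 x)).
have zi_out : zc false i \notin setH_ Y false by rewrite inE (negPf (z_not_at_both zi_h1)).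
rewrite big_setU1 //= sum_wage_zs0 addrC => /(lt_le_trans h0_full).
have : p%:R / n%:R <= 1 :> R by rewrite ler_pdivrMr ?ltr0n // mul1r ler_nat.
have := B'_range false; lra.
Qed.

Lemma b_at_h0 : bc \in Y.
Proof.
apply/contraT => b_out; exfalso; have [j xj_h0] := x_at_h0 b_out.
have xj_Y0 : xc false j \in setH_ Y false by rewrite inE xj_h0.
set Z := zc false i |: (setH_ Y false :\ xc false j).
have zi_out : zc false i \notin setH_ Y false :\ xc false j.
  by rewrite !inE (negPf (z_not_at_both zi_h1)) andbF.
have Zh x : x \in Z -> cH x = false.
  by rewrite !inE => /orP[/eqP-> | /andP[_ /andP[_ /eqP]]].
apply: (block_absurd Zh).
- move=> x; rewrite !inE => /orP[/eqP-> zi_new | /andP[_ /andP[-> //]]].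
  exact: pref_top.
- rewrite /futil big_setU1 //= (big_setD1 _ xj_Y0) /=.
  by rewrite ltrD2r ltrDl invr_gt0 ltr0n.
- have := Y_wage false; rewrite /wage_h (big_setD1 _ xj_Y0).
  by rewrite big_setU1.
Qed.

Lemma card_hired_x_h1 : #|hired_x true|%:R <= (1 + alpha - beta) * (m%:R : R).
Proof.
have sub_Y1 : zc true i |: [set xc true j | j in hired_x true] \subset setH_ Y true.
  rewrite subUset sub1set inE zi_h1 /=; apply/subsetP => _ /imsetP[j + ->].
  by rewrite !inE => ->.
have x_inj : injective (fun j => xc true j) by move=> j j' [].
have := le_trans (ler_sum_subset sub_Y1 (fun x _ => ltW (wage_gt0 x))) (Y_wage true).
rewrite big_setU1 /=; last by apply/imsetP => -[].
rewrite (@sumr_const_in _ _ _ _ m%:R^-1) ?card_imset //; last by move=> _ /imsetP[j _ ->].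
rewrite -ler_pdivrMr ?ltr0n //; have := B'_range true; lra.
Qed.

Section BAtH0.
Hypothesis bY : bc \in Y.

Let t := #|setH_ Y false :\ bc|.
Let k := Num.truncn (n%:R * B' false - t%:R).

Lemma card_h0_not_b : t%:R <= n%:R * (B' false - beta).
Proof.
have := Y_wage false; rewrite wage_h0_with_b // -lerBrDl ler_pdivrMr ?ltr0n //.
by rewrite mulrC.
Qed.

Lemma truncn_h0_room : (k%:R : R) <= n%:R * B' false - t%:R < k.+1%:R.
Proof.
apply: truncn_itv; have := card_h0_not_b.
have : 0 <= n%:R * beta by rewrite mulr_ge0 // ltW.
lra.
Qed.

Lemma enough_free_x : (k <= #|free_x|)%N.
Proof.
suff : (k + t + #|hired_x true| <= m)%N.
  move/leq_trans/(_ card_free_x).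
  by rewrite [X in (_ <= X)%N]addnAC -!addnA leq_add2r.
have /andP[_ B'_le] := B'_range false.
have B'_n : n%:R * B' false <= n%:R * (1 + alpha) by rewrite ler_pM2l ?ltr0n.
have /andP[k_le _] := truncn_h0_room.
have k_t : (k + t)%:R <= n%:R * B' false :> R by rewrite natrD; lra.
suff kt_J : (k + t)%:R + #|hired_x true|%:R <= (m%:R : R).
  by rewrite -(ler_nat R) natrD.
by move: k_t card_hired_x_h1 B'_n m_large; lra.
Qed.

Lemma b_at_h0_absurd : False.
Proof.
have [S S_free card_S] := exists_subset_card enough_free_x.
set T0 := setH_ Y false :\ bc; set hires := [set xc false j | j in S].
have hires_out x : x \in hires -> x \notin Y.
  by case/imsetP=> j /(subsetP S_free); rewrite !inE negb_or => /andP[_ +] ->.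
have card_hires : #|hires| = k by rewrite card_imset // => j j' [].
have disj : [disjoint T0 & hires].
  rewrite disjoint_sym disjoint_subset; apply/subsetP => x /hires_out x_out.
  by rewrite !inE (negPf x_out) andbF.
have Zh x : x \in T0 :|: hires -> cH x = false.
  by rewrite !inE => /orP[/andP[_ /andP[_ /eqP]] | /imsetP[j _ ->]].
have /andP[_ k_gt] := truncn_h0_room.
apply: (block_absurd Zh).
- move=> x; rewrite !inE => /orP[/andP[_ /andP[-> //]] | /imsetP[j jS ->] _].
  apply: pref_unmatched => -[[h [i'|j']]|] //= yY; apply/eqP => -[jj']; subst j'.
  move: (subsetP S_free j jS); rewrite !inE negb_or.
  by case: h yY => ->; rewrite ?andbF.
- rewrite /futil (big_setD1 bc) ?inE ?bY //= -/T0 big_setU_disjoint // /=.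
  rewrite (@sumr_const_in _ _ hires _ 1); last by move=> _ /imsetP[j _ ->].
  rewrite card_hires mulr1 addrC ltrD2l.
  by move: k_gt card_h0_not_b V_small; rewrite -natr1; lra.
- rewrite big_setU_disjoint //= (@sumr_const_in _ _ T0 _ n%:R^-1);
    last exact: wage_h0_not_b.
  rewrite (@sumr_const_in _ _ hires _ n%:R^-1); last by move=> _ /imsetP[j _ ->].
  have /andP[k_le _] := truncn_h0_room.
  rewrite card_hires -mulrDl -natrD ler_pdivrMr ?ltr0n // mulrC addnC natrD.
  by rewrite -/t; lra.
Qed.

End BAtH0.

Lemma b_not_at_h0 : bc \notin Y.
Proof. exact/negP/b_at_h0_absurd. Qed.

End ZAtH1.

End StableMatching.

Lemma unstable_market_not_stable (B' : hosp Mk -> R) :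
  (forall h, 1 <= B' h <= 1 + alpha) -> forall Y, ~ stable B' Y.
Proof.
move=> B'_range Y Y_stable; have [i zi_h1] := some_z_at_h1 B'_range Y_stable.
by have := b_not_at_h0 B'_range Y_stable zi_h1; rewrite (b_at_h0 B'_range Y_stable zi_h1).
Qed.

End Instability.

End Construction.

Lemma unstable_market_parameters (R : realType) (alpha beta : R) :
  0 < alpha -> alpha < beta -> beta < 1 ->
  exists n p : nat, [/\ 1 < n%:R * beta, n%:R * (1 + alpha - beta) < p%:R, (p <= n)%N,
    (1 + n%:R^-1) * (p%:R - n%:R * (1 - beta) + 1) <= n%:R * beta - 1
  & n%:R * (1 + alpha) <= (n * n)%:R * (beta - alpha)].
Proof.
move=> alpha_gt0 alpha_lt_beta beta_lt1.
have gap_gt0 : 0 < beta - alpha by rewrite subr_gt0.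
(* Any n with n (beta - alpha) > 6 will do. *)
set n := (Num.truncn (6 / (beta - alpha))).+1.
have n_gap : 6 < n%:R * (beta - alpha).
  have : 0 <= 6 / (beta - alpha) by rewrite divr_ge0 // ltW.
  by move/truncn_itv/andP => [_]; rewrite -ltr_pdivrMr.
have n_gt0 : 0 < n%:R :> R by rewrite ltr0n.
have n_alpha_ge0 : 0 <= n%:R * alpha by rewrite mulr_ge0 // ltW.
set t := Num.truncn (n%:R * (1 + alpha - beta)).
have /andP[t_le t_gt] : (t%:R : R) <= n%:R * (1 + alpha - beta) < t.+1%:R.
  by apply: truncn_itv; apply: mulr_ge0; lra.
exists n, t.+1; split => //.
- lra.
- suff : (t.+1%:R : R) <= n%:R by rewrite ler_nat.
  by rewrite -natr1; lra.
- have inv_n_le1 : n%:R^-1 <= 1 :> R by rewrite invf_le1 // ler1n.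
  have inv_n_alpha : n%:R^-1 * (n%:R * alpha) = alpha by rewrite mulKf // lt0r_neq0.
  have u_le : t.+1%:R - n%:R * (1 - beta) + 1 <= n%:R * alpha + 2 :> R.
    by rewrite -natr1; lra.
  have := ler_wpM2l (_ : 0 <= 1 + n%:R^-1) u_le; rewrite addr_ge0 ?invr_ge0 //.
  lra.
- rewrite natrM -mulrA ler_pM2l //; lra.
Qed.

Theorem theorem1 (R : realType) (alpha beta : R) :
  0 < alpha -> alpha < beta -> beta < 1 ->
  exists M : market R,
    (forall h : hosp M, wbar h <= beta * budget h) /\
    (forall B' : hosp M -> R,
       (forall h, budget h <= B' h <= (1 + alpha) * budget h) ->
       ~ (exists Y : {set con M}, stable B' Y)).
Proof.
move=> alpha_gt0 alpha_lt_beta beta_lt1.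
have [n [p [nbeta_gt1 p_large p_le_n V_large m_large]]] :=
  unstable_market_parameters alpha_gt0 alpha_lt_beta beta_lt1.
have beta_gt0 : 0 < beta by apply: lt_trans alpha_lt_beta.
have n_gt0 : (0 < n)%N by rewrite -(ltr0n R); nra.
have nn_gt0 : (0 < n * n)%N by rewrite muln_gt0 n_gt0.
have V_gt0 : 0 < n%:R * beta - 1 by rewrite subr_gt0.
exists (unstable_market p beta_gt0 (ltW beta_lt1) n_gt0 nn_gt0 V_gt0); split.
  have inv_le k : (0 < k)%N -> 1 <= k%:R * beta -> k%:R^-1 <= beta.
    by move=> k_gt0 k_beta; rewrite -(@ler_pM2l _ k%:R) ?ltr0n // mulfV ?pnatr_eq0 -?lt0n.
  have n_ge1 : 1 <= n%:R :> R by rewrite ler1n.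
  by apply: wbar_unstable_market; apply: inv_le => //; rewrite ?natrM; nra.
move=> B' B'_range [Y].
apply: (unstable_market_not_stable p_large p_le_n V_large (lexx _) m_large).
by move=> h; rewrite -[1]/(budget h) -[1 + alpha]mulr1.
Qed.
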